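(* Let $R$ be an abelian ring (an associative ring with identity in which every idempotent is central). Then $R$ is weakly clean if and only if $R$ is weakly $r$-clean.
   Context: For a ring $R$ with identity, $U(R)$ denotes its units, $Idem(R)$ its idempotents, and $Reg(R)=\{r\in R:\ r=ryr \text{ for some } y\in R\}$ its (von Neumann) regular elements. An element $x\in R$ is weakly clean if $x=u+e$ or $x=u-e$ for some $u\in U(R)$, $e\in Idem(R)$; $R$ is weakly clean if all its elements are weakly clean. An element $x\in R$ is weakly $r$-clean if $x=r+e$ or $x=r-e$ for some $r\in Reg(R)$, $e\in Idem(R)$; $R$ is weakly $r$-clean if all its elements are weakly $r$-clean. *)

From mathcomp Require Import all_boot all_algebra.
Set Implicit Arguments. Unset Strict Implicit. Unset Printing Implicit Defensive.
Import GRing.Theory.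
Local Open Scope ring_scope.

Definition is_unit (R : pzRingType) (u : R) : Prop :=
  exists v : R, u * v = 1 /\ v * u = 1.

Definition is_idem (R : pzRingType) (e : R) : Prop := e * e = e.

Definition is_regular (R : pzRingType) (r : R) : Prop :=
  exists y : R, r = r * y * r.

Definition abelian_ring (R : pzRingType) : Prop :=
  forall e : R, is_idem e -> forall x : R, e * x = x * e.

Definition weakly_clean_elt (R : pzRingType) (x : R) : Prop :=
  exists u e : R, is_unit u /\ is_idem e /\ (x = u + e \/ x = u - e).

Definition weakly_clean (R : pzRingType) : Prop :=
  forall x : R, weakly_clean_elt x.

Definition weakly_r_clean_elt (R : pzRingType) (x : R) : Prop :=
  exists r e : R, is_regular r /\ is_idem e /\ (x = r + e \/ x = r - e).

Definition weakly_r_clean (R : pzRingType) : Prop :=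
  forall x : R, weakly_r_clean_elt x.

From mathcomp Require Import all_boot all_algebra.
Set Implicit Arguments. Unset Strict Implicit. Unset Printing Implicit Defensive.
Import GRing.Theory.
Local Open Scope ring_scope.

(* Units are regular, so weakly clean implies weakly r-clean.  Conversely, in an
   abelian ring a regular r has a central idempotent e = r y with r e = r, and
   r + (1 - e) t is a unit for every unit t, as the summands live in the
   complementary corners e R and (1 - e) R.  For x = r + g or x = r - g with g
   idempotent, the unit s = 2g - 1 splits g as (1 - e) s + h with
   h = e g + (1 - e)(1 - g) idempotent, so x = (r + (1 - e) s) + h or
   x = (r - (1 - e) s) - h. *)

Lemma unit_regular (R : pzRingType) (u : R) : is_unit u -> is_regular u.
Proof. by case=> v [uv _]; exists v; rewrite uv mul1r. Qed.

Lemma unitN (R : pzRingType) (u : R) : is_unit u -> is_unit (- u).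
Proof. by case=> v [uv vu]; exists (- v); rewrite !mulrNN. Qed.

Lemma idem_compl (R : pzRingType) (e : R) : is_idem e -> is_idem (1 - e).
Proof. by move=> ie; rewrite /is_idem mulrBl mul1r mulrBr mulr1 ie subrr subr0. Qed.

Lemma idem_reflection_unit (R : pzRingType) (g : R) :
  is_idem g -> is_unit (g + g - 1).
Proof.
move=> ig; have sq1 : (g + g - 1) * (g + g - 1) = 1.
  rewrite mulrBl !mulrDl !mulrBr !mulrDr mul1r !mulr1 ig.
  by rewrite !addrK opprB addrC subrK.
by exists (g + g - 1).
Qed.

Lemma idemD_orth (R : pzRingType) (a b : R) : is_idem a -> is_idem b ->
  a * b = 0 -> b * a = 0 -> is_idem (a + b).
Proof.
by move=> ia ib ab0 ba0; rewrite /is_idem mulrDl !mulrDr ia ib ab0 ba0 addr0 add0r.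
Qed.

Section AbelianRing.
Variable R : pzRingType.
Hypothesis abR : abelian_ring R.

Lemma mulr_idemCA (f : R) : is_idem f ->
  forall e a b, e * a * (f * b) = e * f * (a * b).
Proof. by move=> jf e a b; rewrite -mulrA (mulrA a) -(abR jf a) !mulrA. Qed.

Lemma idemM_central (e f : R) : is_idem e -> is_idem f -> is_idem (e * f).
Proof. by move=> ie jf; rewrite /is_idem (mulr_idemCA ie) ie jf. Qed.

Lemma regular_group_inverse (r : R) : is_regular r -> exists y e : R,
  [/\ is_idem e, r * y = e, y * r = e, r * e = r & e * y = y].
Proof.
case=> y ryr.
have ie : is_idem (r * y) by rewrite /is_idem mulrA -ryr.
have jf : is_idem (y * r) by rewrite /is_idem -mulrA (mulrA r) -ryr.
have re : r * (r * y) = r by rewrite -(abR ie) -ryr.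
have rf : r * (y * r) = r by rewrite mulrA -ryr.
(* the central idempotents r y and y r absorb each other *)
have ef : r * y = y * r.
  have -> : r * y = r * y * (y * r) by rewrite -mulrA -(abR jf y) mulrA rf.
  by rewrite (abR ie) -mulrA re.
exists (y * (r * y)), (r * y); split=> //.
- by rewrite mulrA ie.
- by rewrite -mulrA -ryr ef.
- by rewrite (abR ie) -mulrA ie.
Qed.

Lemma regular_add_compl_unit (r : R) : is_regular r -> exists e : R,
  [/\ is_idem e, r * e = r & forall t, is_unit t -> is_unit (r + (1 - e) * t)].
Proof.
case/regular_group_inverse=> y [e [ie ry yr re ey]].
exists e; split=> // t [t' [tt' t't]].
have ie' := idem_compl ie.
have r_e' : r * (1 - e) = 0 by rewrite mulrBr mulr1 re subrr.
have y_e' : y * (1 - e) = 0 by rewrite -(abR ie') mulrBl mul1r ey subrr.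
have e'_r : (1 - e) * r = 0 by rewrite (abR ie') r_e'.
have e'_y : (1 - e) * y = 0 by rewrite (abR ie') y_e'.
exists (y + (1 - e) * t'); split.
- rewrite mulrDl !mulrDr ry (mulr_idemCA ie') ie' tt' mulr1.
  rewrite mulrA r_e' mul0r (abR ie' t) -mulrA e'_y mulr0.
  by rewrite addr0 add0r addrC subrK.
- rewrite mulrDl !mulrDr yr (mulr_idemCA ie') ie' t't mulr1.
  rewrite mulrA y_e' mul0r (abR ie' t') -mulrA e'_r mulr0.
  by rewrite addr0 add0r addrC subrK.
Qed.

Lemma idem_split (e g : R) : is_idem e -> is_idem g ->
  let h := e * g + (1 - e) * (1 - g) in
  is_idem h /\ g = (1 - e) * (g + g - 1) + h.
Proof.
move=> ie ig h; split.
- have ie' := idem_compl ie; have ig' := idem_compl ig.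
  have orth : e * (1 - e) = 0 by rewrite mulrBr mulr1 ie subrr.
  have orth' : (1 - e) * e = 0 by rewrite -(abR ie) orth.
  apply: idemD_orth; [exact: idemM_central | exact: idemM_central | |].
  - by rewrite (mulr_idemCA ie') orth mul0r.
  - by rewrite (mulr_idemCA ie) orth' mul0r.
- rewrite /h addrA [_ + e * g]addrC -addrA -mulrDr.
  have -> : g + g - 1 + (1 - g) = g by rewrite addrA subrK addrK.
  by rewrite -mulrDl addrC subrK mul1r.
Qed.

End AbelianRing.

Theorem theorem2p8 (R : pzRingType) :
  abelian_ring R -> (weakly_clean R <-> weakly_r_clean R).
Proof.
move=> abR; split=> [clean | rclean] x.
  have [u [e [uu [ie hx]]]] := clean x.
  by exists u, e; split=> //; apply: unit_regular.
have [r [g [rr [ig hx]]]] := rclean x.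
have [e [ie _ shift_unit]] := regular_add_compl_unit abR rr.
have [ih hg] := idem_split abR ie ig.
have us := idem_reflection_unit ig.
set h := e * g + (1 - e) * (1 - g) in ih hg.
case: hx => ->.
- exists (r + (1 - e) * (g + g - 1)), h; split; first exact: shift_unit us.
  by split=> //; left; rewrite -addrA -hg.
- exists (r + (1 - e) * - (g + g - 1)), h; split; first exact/shift_unit/unitN.
  by split=> //; right; rewrite mulrN -addrA -opprD -hg.
Qed.
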